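(* Let $R$ be the ring of integers of a nonarchimedean local field $F$ of characteristic not $2$ in which $2$ is a prime element. Any even $R$-lattice of rank $4$ that primitively represents all even $R$-lattices of rank $2$ is isometric to $\mathbb{H}^2$.
   Context: An $R$-lattice is a finitely generated $R$-submodule of a quadratic space $(V,B)$ over $F$ with $Q(v)=B(v,v)$, assumed integral ($B(L,L)\subseteq R$) and nondegenerate; it is even if $Q(L)\subseteq 2R$. A representation is an $R$-linear map preserving $B$; it is primitive if its image is a direct summand. $\mathbb{H}$ is the binary lattice with Gram matrix $\begin{pmatrix}0&1\\1&0\end{pmatrix}$ and $\mathbb{H}^2=\mathbb{H}\perp\mathbb{H}$. *)

From HB Require Import structures.
From mathcomp Require Import all_boot all_order all_algebra.
Set Implicit Arguments. Unset Strict Implicit. Unset Printing Implicit Defensive.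
Import Order.TTheory GRing.Theory Num.Theory.
Local Open Scope ring_scope.

Definition dvdR (R : comNzRingType) (a b : R) : Prop := exists c : R, b = a * c.

(* R is the ring of integers of a nonarchimedean local field F (= Frac R)
   of characteristic not 2 in which 2 is a prime element.  Equivalently:
   R is a complete discrete valuation ring with finite residue field whose
   maximal ideal is generated by 2 (2 <> 0 gives char F <> 2). *)
Definition dyadic_local_integers (R : idomainType) : Prop :=
  [/\ (2%:R : R) != 0,
      ~~ ((2%:R : R) \is a GRing.unit),
      (forall x : R, x != 0 ->
         exists (k : nat) (u : R), u \is a GRing.unit /\ x = u * 2%:R ^+ k),
      (exists s : seq R, forall x : R, exists2 y, y \in s & dvdR 2%:R (x - y))
    &
      (forall a : nat -> R,
         (forall n, dvdR (2%:R ^+ n) (a n.+1 - a n)) ->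
         exists l : R, forall n, dvdR (2%:R ^+ n) (l - a n))].

(* An R-lattice of rank n, given by its Gram matrix in a basis (lattices over
   the PID R are free): symmetric, integral (entries in R), nondegenerate. *)
Definition lattice (R : idomainType) (n : nat) (G : 'M[R]_n) : Prop :=
  G^T = G /\ \det G != 0.

Definition even_lattice (R : idomainType) (n : nat) (G : 'M[R]_n) : Prop :=
  lattice G /\ forall v : 'rV[R]_n, dvdR 2%:R ((v *m G *m v^T) 0 0).

(* X (rows = images of the basis of L) is a representation of L (Gram GL)
   by M (Gram GM): it preserves the bilinear form. *)
Definition representation (R : idomainType) (m n : nat)
  (GM : 'M[R]_m) (GL : 'M[R]_n) (X : 'M[R]_(n, m)) : Prop :=
  X *m GM *m X^T = GL.

(* The image of X (the R-span of its rows) is a direct summand of R^m,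
   i.e. it is the image of an idempotent R-linear endomorphism P of R^m. *)
Definition primitive_image (R : idomainType) (m n : nat) (X : 'M[R]_(n, m)) : Prop :=
  exists P : 'M[R]_m, P *m P = P /\
    (forall v : 'rV[R]_m, exists c : 'rV[R]_n, v *m P = c *m X) /\
    (forall c : 'rV[R]_n, exists v : 'rV[R]_m, c *m X = v *m P).

Definition prim_represents (R : idomainType) (m n : nat)
  (GM : 'M[R]_m) (GL : 'M[R]_n) : Prop :=
  exists X : 'M[R]_(n, m), representation GM GL X /\ primitive_image X.

Definition isometric (R : idomainType) (n : nat) (G H : 'M[R]_n) : Prop :=
  exists U : 'M[R]_n, U \in unitmx /\ U *m G *m U^T = H.

Definition hyp (R : idomainType) : 'M[R]_2 :=
  \matrix_(i < 2, j < 2) (if i == j then 0 else 1).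
Definition hyp2 (R : idomainType) : 'M[R]_4 := block_mx (hyp R) 0 0 (hyp R).

(* Split off a primitively represented hyperbolic plane: L = H _|_ M with M
   even binary.  If 2^d exactly divides disc M = -det M, a primitive
   representation of 2^(d+2) H by L forces disc M to be a unit times 2^d that
   is a square modulo 2^(d+3), hence a square (Hensel: 1 + 8r is a square), so
   M is isotropic and M ~ [[0, b], [b, 2c]].  If b is a unit, M ~ H.  If b is
   even, pick r with x^2 + xy + r y^2 anisotropic modulo 2, which exists
   because x |-> x^2 + x is not onto the finite residue field; then L cannot
   represent [[2, 1], [1, 2r]] (c even) or twice it (c a unit). *)

From HB Require Import structures.
From mathcomp Require Import all_boot all_order all_algebra all_fingroup.
From mathcomp Require Import ring.
From Stdlib Require Import ClassicalEpsilon Classical.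
Import GRing.Theory.
Local Open Scope ring_scope.
Set Implicit Arguments. Unset Strict Implicit. Unset Printing Implicit Defensive.

Section Divisibility.
Variable R : comNzRingType.
Implicit Types a b x y : R.

Lemma dvdR_refl a : dvdR a a. Proof. by exists 1; rewrite mulr1. Qed.

Lemma dvdR0 a : dvdR a 0. Proof. by exists 0; rewrite mulr0. Qed.

Lemma dvdR_multiple a x : dvdR a (a * x). Proof. by exists x. Qed.

Lemma dvdRD a x y : dvdR a x -> dvdR a y -> dvdR a (x + y).
Proof. by move=> [c ->] [d ->]; exists (c + d); rewrite mulrDr. Qed.

Lemma dvdRN a x : dvdR a x -> dvdR a (- x).
Proof. by move=> [c ->]; exists (- c); rewrite mulrN. Qed.

Lemma dvdRB a x y : dvdR a x -> dvdR a y -> dvdR a (x - y).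
Proof. by move=> hx /dvdRN; apply: dvdRD. Qed.

Lemma dvdR_mull a x y : dvdR a y -> dvdR a (x * y).
Proof. by move=> [c ->]; exists (x * c); rewrite mulrCA. Qed.

Lemma dvdR_mulr a x y : dvdR a x -> dvdR a (x * y).
Proof. by move=> [c ->]; exists (c * y); rewrite mulrA. Qed.

Lemma dvdR_mul a b x y : dvdR a x -> dvdR b y -> dvdR (a * b) (x * y).
Proof. by move=> [c ->] [d ->]; exists (c * d); rewrite mulrACA. Qed.

Lemma dvdR_trans a b x : dvdR a b -> dvdR b x -> dvdR a x.
Proof. by move=> [c ->] [d ->]; exists (c * d); rewrite mulrA. Qed.

Lemma dvdR_exp2l a m n : (m <= n)%N -> dvdR (a ^+ m) (a ^+ n).
Proof. by move=> mn; exists (a ^+ (n - m)); rewrite -exprD subnKC. Qed.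

End Divisibility.

Lemma dvdR_mul2l (R : idomainType) (c x y : R) :
  c != 0 -> dvdR (c * x) (c * y) -> dvdR x y.
Proof. by move=> c0 [d]; rewrite -mulrA => /(mulfI c0) ->; exists d. Qed.

Section FiniteQuotient.
Variables (T : eqType) (e : T -> T -> Prop) (s : seq T) (f : T -> T).
Hypothesis e_sym : forall x y, e x y -> e y x.
Hypothesis e_trans : forall x y z, e x y -> e y z -> e x z.
Hypothesis s_covers : forall x, exists2 y, y \in s & e x y.
Hypothesis f_compat : forall x y, e x y -> e (f x) (f y).

Lemma inj_mod_of_onto_mod :
  (forall y, exists x, e (f x) y) -> forall x y, e (f x) (f y) -> e x y.
Proof.
move=> f_onto x0 y0 fxy.
pose eb a b := if excluded_middle_informative (e a b) then true else false.
have ebP a b : reflect (e a b) (eb a b).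
  by rewrite /eb; case: excluded_middle_informative => h; constructor.
pose k a := find (eb a) s.
have has_eb a : has (eb a) s.
  by have [y ys ay] := s_covers a; apply/hasP; exists y => //; apply/ebP.
have k_lt a : (k a < size s)%N by rewrite /k -has_find.
have k_rep a : e a (nth x0 s (k a)) by apply/ebP; apply: nth_find.
have k_eq a b : e a b -> k a = k b.
  move=> ab; apply: eq_find => z; apply/ebP/ebP => [az | bz].
    exact: e_trans (e_sym ab) az.
  exact: e_trans ab bz.
have eq_k a b : k a = k b -> e a b.
  by move=> kab; apply: e_trans (k_rep a) _; rewrite kab; apply: e_sym.
pose kk a : 'I_(size s) := Ordinal (k_lt a).
pose K := [set i : 'I_(size s) | k (nth x0 s i) == i].
pose g (i : 'I_(size s)) := kk (f (nth x0 s i)).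
have kkK a : kk a \in K by rewrite inE /=; apply/eqP/esym/k_eq.
have g_kk a : g (kk a) = kk (f a).
  by apply: val_inj; apply: k_eq; apply: f_compat; apply: e_sym.
have gK : g @: K = K.
  apply/setP => i; apply/imsetP/idP => [[j _ ->] | iK]; first exact: kkK.
  have [t ht] := f_onto (nth x0 s i); exists (kk t); first exact: kkK.
  rewrite g_kk; apply: val_inj => /=.
  by move: iK; rewrite inE => /eqP <-; apply/k_eq/e_sym.
have g_inj : {in K &, injective g} by apply/imset_injP; rewrite gK.
apply: eq_k; apply: (congr1 val (g_inj _ _ (kkK x0) (kkK y0) _)).
by rewrite !g_kk; apply: val_inj; apply: k_eq.
Qed.

End FiniteQuotient.

Section DyadicIntegers.
Variable R : idomainType.
Hypothesis hR : dyadic_local_integers R.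
Local Notation two := (2%:R : R).
Implicit Types r u x y : R.

Lemma two_neq0 : two != 0. Proof. by case: hR. Qed.

Lemma two_nonunit : two \isn't a GRing.unit. Proof. by case: hR. Qed.

Lemma dyadic_factor x : x != 0 ->
  exists (k : nat) (u : R), u \is a GRing.unit /\ x = u * two ^+ k.
Proof. by case: hR => _ _ H _ _; apply: H. Qed.

Lemma exp2_neq0 n : two ^+ n != 0. Proof. by rewrite expf_neq0 // two_neq0. Qed.

Lemma unit_ndvd2 u : u \is a GRing.unit -> ~ dvdR two u.
Proof. by move=> uU [c hc]; move: uU; rewrite hc unitrM (negbTE two_nonunit). Qed.

Lemma unit_or_dvd2 x : x \is a GRing.unit \/ dvdR two x.
Proof.
have [->|x0] := eqVneq x 0; first by right; apply: dvdR0.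
have [[|k] [u [uU ->]]] := dyadic_factor x0; first by left; rewrite mulr1.
by right; rewrite exprS mulrCA; apply: dvdR_multiple.
Qed.

Lemma dvd2_mul x y : dvdR two (x * y) -> dvdR two x \/ dvdR two y.
Proof.
move=> h; case: (unit_or_dvd2 x) => [xU|]; last by left.
case: (unit_or_dvd2 y) => [yU|]; last by right.
by case: (unit_ndvd2 _ h); rewrite unitrM xU yU.
Qed.

Lemma unitD_dvd2 u x :
  u \is a GRing.unit -> dvdR two x -> (u + x) \is a GRing.unit.
Proof.
move=> uU x2; case: (unit_or_dvd2 (u + x)) => // h; case: (unit_ndvd2 uU).
by rewrite -(addrK x u); apply: dvdRB.
Qed.

Lemma unitD_split x y :
  (x + y) \is a GRing.unit -> x \is a GRing.unit \/ y \is a GRing.unit.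
Proof.
move=> h; case: (unit_or_dvd2 x) => [|x2]; first by left.
case: (unit_or_dvd2 y) => [|y2]; first by right.
by case: (unit_ndvd2 h); apply: dvdRD.
Qed.

Lemma unit_exp2_inj (u1 u2 : R) a b :
  u1 \is a GRing.unit -> u2 \is a GRing.unit ->
  u1 * two ^+ a = u2 * two ^+ b -> a = b /\ u1 = u2.
Proof.
wlog ab : u1 u2 a b / (a <= b)%N.
  move=> W u1U u2U e; case: (leqP a b) => [|/ltnW] ab; first exact: W.
  by have [-> ->] := W u2 u1 b a ab u2U u1U (esym e).
move=> u1U u2U e.
have e1 : u1 = u2 * two ^+ (b - a).
  by apply: (mulIf (exp2_neq0 a)); rewrite e -mulrA -exprD subnK.
case: (ltnP a b) => [lt_ab | ba].
  case: (unit_ndvd2 u1U); rewrite e1 -(subnSK lt_ab) exprS mulrCA.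
  exact: dvdR_multiple.
have eab : a = b by apply/eqP; rewrite eqn_leq ab.
by rewrite e1 eab subnn mulr1.
Qed.

Lemma dvd_exp2_eq0 x : (forall n, dvdR (two ^+ n) x) -> x = 0.
Proof.
move=> h; apply/eqP/negPn/negP => /dyadic_factor [k [u [uU ex]]].
have [c hc] := h k.+1; apply: (unit_ndvd2 uU); exists c.
by apply: (mulIf (exp2_neq0 k)); rewrite -ex hc exprS; ring.
Qed.

(* Hensel: the root is the 2-adic limit of the iteration [y |-> r - 2 y^2]. *)
Lemma sqr_1_add_8 r : exists s, s ^+ 2 = 1 + two ^+ 3 * r.
Proof.
pose f y := r - two * y ^+ 2; pose a n := iter n f r.
have a_cauchy n : dvdR (two ^+ n) (a n.+1 - a n).
  elim: n => [|n IH]; first by exists (a 1 - a 0); rewrite mul1r.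
  have -> : a n.+2 - a n.+1 = two * (a n.+1 - a n) * - (a n.+1 + a n).
    by rewrite [a n.+2]/a iterS -/(a n.+1) [a n.+1]/a iterS -/(a n) /f; ring.
  by apply: dvdR_mulr; rewrite exprS; apply: dvdR_mul => //; apply: dvdR_refl.
have [l hl] : exists l, forall n, dvdR (two ^+ n) (l - a n) by case: hR => _ _ _ _; apply.
have fixl : l = f l.
  apply/eqP; rewrite -subr_eq0; apply/eqP/dvd_exp2_eq0 => n.
  have -> : l - f l = (l - a n.+1) + two * (l - a n) * (l + a n).
    by rewrite [a n.+1]/a iterS -/(a n) /f; ring.
  apply: dvdRD; first exact: dvdR_trans (dvdR_exp2l _ (leqnSn n)) (hl n.+1).
  by apply/dvdR_mulr/dvdR_mull.
have er : r = l + two * l ^+ 2 by rewrite {1}fixl /f; ring.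
by exists (1 + two ^+ 2 * l); rewrite er; ring.
Qed.

Lemma dvd2_subr1_neq0 x : dvdR two x -> x - 1 != 0.
Proof.
rewrite subr_eq0 => x2; apply/eqP => x1.
by move: x2; rewrite x1; apply: unit_ndvd2; rewrite unitr1.
Qed.

Lemma dvd2_exp2 n : (0 < n)%N -> dvdR two (two ^+ n).
Proof. by case: n => // n _; rewrite exprS; apply: dvdR_multiple. Qed.

Lemma square_of_approx_square D δ d t τ :
  δ \is a GRing.unit -> D = δ * two ^+ d -> τ \is a GRing.unit ->
  dvdR (two ^+ (d + 3)) (t ^+ 2 - D * τ ^+ 2) -> exists r, D = r ^+ 2.
Proof.
move=> δU -> τU [ρ hρ].
pose ω := δ * τ ^+ 2 + two ^+ 3 * ρ.
have ωU : ω \is a GRing.unit.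
  apply: unitD_dvd2; first by rewrite unitrM δU unitrX.
  by rewrite exprS -mulrA; apply: dvdR_multiple.
have tE : t ^+ 2 = ω * two ^+ d.
  by rewrite -[t ^+ 2](subrK (δ * two ^+ d * τ ^+ 2)) hρ /ω exprD; ring.
have t0 : t != 0.
  apply: contraTneq ωU => t0; move/eqP: tE; rewrite t0 expr0n /= eq_sym.
  by rewrite mulf_eq0 (negbTE (exp2_neq0 d)) orbF => /eqP ->; rewrite unitr0.
have [e [u [uU tu]]] := dyadic_factor t0.
have [<- uω] : (e + e)%N = d /\ u ^+ 2 = ω.
  apply: unit_exp2_inj; rewrite ?unitrX // -tE tu exprMn -exprM.
  by rewrite mulnC mul2n addnn.
have [σ hσ] := sqr_1_add_8 (- ρ * u^-1 ^+ 2).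
have σu : (σ * u) ^+ 2 = δ * τ ^+ 2.
  have -> : (σ * u) ^+ 2 = u ^+ 2 - two ^+ 3 * ρ * (u^-1 * u) ^+ 2.
    by rewrite exprMn hσ; ring.
  by rewrite mulVr // expr1n mulr1 uω /ω addrK.
exists (σ * u * τ^-1 * two ^+ e).
have -> : (σ * u * τ^-1 * two ^+ e) ^+ 2 = (σ * u) ^+ 2 * τ^-1 ^+ 2 * two ^+ (e + e).
  by rewrite exprD; ring.
rewrite σu.
have -> : δ * τ ^+ 2 * τ^-1 ^+ 2 * two ^+ (e + e) =
          δ * (τ * τ^-1) ^+ 2 * two ^+ (e + e) by ring.
by rewrite mulrV // expr1n mulr1.
Qed.

Lemma sqr_add_self_not_onto_mod2 :
  ~ (forall y, exists t, dvdR two (t ^+ 2 + t - y)).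
Proof.
move=> onto.
have [s s_covers] : exists s : seq R, forall x, exists2 y, y \in s & dvdR two (x - y).
  by case: hR.
pose e x y := dvdR two (x - y).
have e_sym x y : e x y -> e y x by move=> exy; rewrite /e -opprB; apply: dvdRN.
have e_trans x y z : e x y -> e y z -> e x z.
  by move=> exy eyz; rewrite /e -(subrKA y); apply: dvdRD.
pose φ (t : R) := t ^+ 2 + t.
have φ_compat x y : e x y -> e (φ x) (φ y).
  move=> exy; rewrite /e (_ : φ x - φ y = (x - y) * (x + y + 1)).
    exact: dvdR_mulr.
  by rewrite /φ; ring.
have φ01 : e (φ 0) (φ 1) by exists (-1); rewrite /φ; ring.
have := inj_mod_of_onto_mod e_sym e_trans s_covers φ_compat onto φ01.
by rewrite /e sub0r => /dvdRN; rewrite opprK; apply: unit_ndvd2; rewrite unitr1.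
Qed.

Definition anisotropic (ρ : R) := forall c1 c2 : R,
  c1 \is a GRing.unit \/ c2 \is a GRing.unit ->
  (c1 ^+ 2 + c1 * c2 + ρ * c2 ^+ 2) \is a GRing.unit.

Lemma exists_anisotropic : exists ρ, anisotropic ρ.
Proof.
have [y hy] : exists y, forall t, ~ dvdR two (t ^+ 2 + t - y).
  apply: NNPP => none; apply: sqr_add_self_not_onto_mod2 => y.
  by apply: NNPP => ny; apply: none; exists y => t ht; apply: ny; exists t.
exists (- y) => c1 c2 hc; case: (unit_or_dvd2 c2) => [c2U | c2e].
  rewrite -(divrK c2U c1); set t := c1 / c2.
  have -> : (t * c2) ^+ 2 + t * c2 * c2 + - y * c2 ^+ 2 = c2 ^+ 2 * (t ^+ 2 + t - y).
    by ring.
  by rewrite unitrM unitrX //=; case: (unit_or_dvd2 (t ^+ 2 + t - y)) => // /hy.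
have c1U : c1 \is a GRing.unit by case: hc => // /unit_ndvd2.
rewrite -addrA; apply: unitD_dvd2; first by rewrite unitrX.
by apply: dvdRD; [apply: dvdR_mull | rewrite expr2 mulrA; apply: dvdR_mull].
Qed.

Lemma primitive_part z w : z != 0 \/ w != 0 -> exists e z' w',
  [/\ z = two ^+ e * z', w = two ^+ e * w' &
      z' \is a GRing.unit \/ w' \is a GRing.unit].
Proof.
wlog z0 : z w / z != 0.
  move=> W [z0 | w0]; first exact: W (or_introl z0).
  have [e [w' [z' [wE zE hu]]]] := W w z w0 (or_introl w0).
  by exists e, z', w'; split=> //; case: hu; [right | left].
move=> _; have [a [u [uU ->]]] := dyadic_factor z0.
have [-> | w0] := eqVneq w 0.
  by exists a, u, 0; rewrite mulr0 mulrC; split=> //; left.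
have [b [v [vU ->]]] := dyadic_factor w0.
case: (leqP a b) => [ab | /ltnW ba].
  exists a, u, (v * two ^+ (b - a)); split; [by rewrite mulrC | | by left].
  by rewrite mulrCA -exprD subnKC.
exists b, (u * two ^+ (a - b)), v; split; [| by rewrite mulrC | by right].
by rewrite mulrCA -exprD subnKC.
Qed.

Lemma dvd2_det_kernel p q r s : dvdR two (p * s - q * r) -> exists c1 c2,
  [/\ c1 \is a GRing.unit \/ c2 \is a GRing.unit,
      dvdR two (c1 * p + c2 * r) & dvdR two (c1 * q + c2 * s)].
Proof.
move=> det2.
have e1 : r * p + - p * r = 0 by ring.
have e2 : r * q + - p * s = - (p * s - q * r) by ring.
have e3 : s * p + - q * r = p * s - q * r by ring.
have e4 : s * q + - q * s = 0 by ring.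
case: (unit_or_dvd2 p) => [pU | p2].
  by exists r, (- p); rewrite e1 e2 unitrN; split; [right | apply: dvdR0 | apply: dvdRN].
case: (unit_or_dvd2 r) => [rU | r2].
  by exists r, (- p); rewrite e1 e2; split; [left | apply: dvdR0 | apply: dvdRN].
case: (unit_or_dvd2 q) => [qU | q2].
  by exists s, (- q); rewrite e3 e4 unitrN; split; [right | | apply: dvdR0].
case: (unit_or_dvd2 s) => [sU | s2].
  by exists s, (- q); rewrite e3 e4; split; [left | | apply: dvdR0].
by exists 1, 0; rewrite !mul1r !mul0r !addr0; split=> //; left; rewrite unitr1.
Qed.

Section BinaryForm.
Variables m0 m1 m2 : R.

Definition qform z w := m0 * z ^+ 2 + two * m1 * z * w + m2 * w ^+ 2.
Definition bform z1 w1 z2 w2 := m0 * z1 * z2 + m1 * (z1 * w2 + w1 * z2) + m2 * w1 * w2.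
Local Notation disc := (m1 ^+ 2 - m0 * m2).

Lemma bform_sqr_sub z1 w1 z2 w2 :
  bform z1 w1 z2 w2 ^+ 2 - qform z1 w1 * qform z2 w2 = disc * (z1 * w2 - w1 * z2) ^+ 2.
Proof. by rewrite /bform /qform; ring. Qed.

(* [(x_i, y_i | t_i1, t_i2)] are the rows of a representation of
   [[n0, n1], [n1, n2]] by [H _|_ M]; the form is evaluated at their
   combination [c1 row_1 + c2 row_2]. *)
Lemma rep_qform_comb n0 n1 n2 x1 y1 x2 y2 t11 t12 t21 t22 c1 c2 :
  two * x1 * y1 + qform t11 t12 = n0 -> two * x2 * y2 + qform t21 t22 = n2 ->
  x1 * y2 + x2 * y1 + bform t11 t12 t21 t22 = n1 ->
  two * (c1 * x1 + c2 * x2) * (c1 * y1 + c2 * y2) +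
    qform (c1 * t11 + c2 * t21) (c1 * t12 + c2 * t22) =
  c1 ^+ 2 * n0 + two * c1 * c2 * n1 + c2 ^+ 2 * n2.
Proof. by move=> <- <- <-; rewrite /qform /bform; ring. Qed.

Lemma disc_square_of_isotropic_mod δ d z w :
  δ \is a GRing.unit -> disc = δ * two ^+ d ->
  z \is a GRing.unit \/ w \is a GRing.unit ->
  dvdR (two ^+ (d + 3)) (qform z w) -> exists r, disc = r ^+ 2.
Proof.
move=> δU discE [zU | wU] Q0.
  apply: (square_of_approx_square (t := m2 * w + m1 * z) δU discE zU).
  have -> : (m2 * w + m1 * z) ^+ 2 - disc * z ^+ 2 = m2 * qform z w.
    by rewrite /qform; ring.
  exact: dvdR_mull.
apply: (square_of_approx_square (t := m0 * z + m1 * w) δU discE wU).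
have -> : (m0 * z + m1 * w) ^+ 2 - disc * w ^+ 2 = m0 * qform z w.
  by rewrite /qform; ring.
exact: dvdR_mull.
Qed.

Lemma primitive_isotropic_vector r : disc = r ^+ 2 -> exists p0 p1,
  (p0 \is a GRing.unit \/ p1 \is a GRing.unit) /\ qform p0 p1 = 0.
Proof.
move=> discE; have [m00 | m0_neq0] := eqVneq m0 0.
  by exists 1, 0; split; [left; rewrite unitr1 | rewrite /qform m00; ring].
have [e [z [w [zE wE zwU]]]] := primitive_part (or_intror m0_neq0 : r - m1 != 0 \/ _).
exists z, w; split=> //; apply: (mulfI (expf_neq0 2 (exp2_neq0 e))); rewrite mulr0.
have -> : two ^+ e ^+ 2 * qform z w = qform (two ^+ e * z) (two ^+ e * w).
  by rewrite /qform; ring.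
rewrite -zE -wE (_ : qform _ _ = m0 * (r ^+ 2 - disc)); last by rewrite /qform; ring.
by rewrite discE subrr mulr0.
Qed.

(* Rows [(x_i, y_i | t_i1, t_i2)] of a primitive representation of [2^(d+2) H]
   by [H _|_ M], where [2^d] exactly divides the discriminant of [M]. *)
Section ScaledHyperbolicRep.
Variables (δ : R) (d : nat) (x1 y1 x2 y2 t11 t12 t21 t22 : R).
Hypothesis δU : δ \is a GRing.unit.
Hypothesis discE : disc = δ * two ^+ d.
Let K := two ^+ (d + 2).
Hypothesis E1 : two * x1 * y1 + qform t11 t12 = 0.
Hypothesis E2 : two * x2 * y2 + qform t21 t22 = 0.
Hypothesis E3 : x1 * y2 + x2 * y1 + bform t11 t12 t21 t22 = K.
Hypothesis prim : forall c1 c2,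
  dvdR two (c1 * x1 + c2 * x2) -> dvdR two (c1 * y1 + c2 * y2) ->
  dvdR two (c1 * t11 + c2 * t21) -> dvdR two (c1 * t12 + c2 * t22) ->
  dvdR two c1 /\ dvdR two c2.

Lemma dvdR_twoK c : dvdR (two ^+ (d + 3)) (two * K * c).
Proof. by rewrite /K -exprS -addnS; apply: dvdR_multiple. Qed.

Lemma disc_square_of_null_comb c1 c2 :
  c1 \is a GRing.unit \/ c2 \is a GRing.unit ->
  dvdR two (c1 * x1 + c2 * x2) -> dvdR two (c1 * y1 + c2 * y2) ->
  (c1 * x1 + c2 * x2) * (c1 * y1 + c2 * y2) = 0 ->
  exists r, disc = r ^+ 2.
Proof.
move=> cU X2 Y2 XY0.
apply: (disc_square_of_isotropic_mod δU discE
  (z := c1 * t11 + c2 * t21) (w := c1 * t12 + c2 * t22)).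
  case: (unit_or_dvd2 (c1 * t11 + c2 * t21)) => [|Z2]; first by left.
  case: (unit_or_dvd2 (c1 * t12 + c2 * t22)) => [|W2]; first by right.
  have [c12 c22] := prim X2 Y2 Z2 W2.
  by case: cU => /unit_ndvd2.
have := rep_qform_comb c1 c2 E1 E2 E3; rewrite -mulrA XY0 mulr0 add0r => ->.
rewrite !mulr0 addr0 add0r (_ : _ * K = two * K * (c1 * c2)); last by ring.
exact: dvdR_twoK.
Qed.

Lemma rep_disc_identity :
  (x1 * y2 - x2 * y1 - K) ^+ 2 - disc * (t11 * t22 - t12 * t21) ^+ 2 =
  two ^+ 2 * K * (x2 * y1).
Proof.
rewrite -bform_sqr_sub.
have -> : bform t11 t12 t21 t22 = K - (x1 * y2 + x2 * y1).
  by rewrite -[bform _ _ _ _](addKr (x1 * y2 + x2 * y1)) E3 addrC.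
have -> : qform t11 t12 = - (two * x1 * y1).
  by rewrite -[qform _ _](addKr (two * x1 * y1)) E1 addr0.
have -> : qform t21 t22 = - (two * x2 * y2).
  by rewrite -[qform _ _](addKr (two * x2 * y2)) E2 addr0.
ring.
Qed.

Lemma disc_square_of_prim_rep : exists r, disc = r ^+ 2.
Proof.
set Δ := x1 * y2 - x2 * y1; set τ := t11 * t22 - t12 * t21.
have K2 : dvdR two K by apply: dvd2_exp2; rewrite addn2.
have Kd : dvdR (two ^+ (d + 3)) ((Δ - K) ^+ 2 - disc * τ ^+ 2).
  rewrite rep_disc_identity (_ : _ * _ = two * K * (two * (x2 * y1))); last by ring.
  exact: dvdR_twoK.
have [τU | τ2] := unit_or_dvd2 τ.
  exact: square_of_approx_square δU discE τU Kd.
(* Now [Δ] is even, so the combination [x2 row_1 - x1 row_2] (or the one with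
   [y]) is isotropic modulo [2^(d+3)]; it is primitive unless all of [x], [y]
   are even, which primitivity excludes since [τ] is even. *)
have Δ2 : dvdR two Δ.
  have [ΔU|//] := unit_or_dvd2 Δ.
  have ΔKU : (Δ - K) ^+ 2 \is a GRing.unit.
    by rewrite unitrX // unitD_dvd2 //; apply: dvdRN.
  case: (unit_ndvd2 ΔKU); rewrite -(subrK (disc * τ ^+ 2) ((Δ - K) ^+ 2)).
  apply: dvdRD; first by apply: dvdR_trans (dvd2_exp2 _) Kd; rewrite addn3.
  by rewrite expr2 mulrA; apply: dvdR_mulr; apply: dvdR_mull.
have [xU | x12] : (x1 \is a GRing.unit \/ x2 \is a GRing.unit) \/
                  (dvdR two x1 /\ dvdR two x2).
  by case: (unit_or_dvd2 x1) (unit_or_dvd2 x2); tauto.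
  apply: (@disc_square_of_null_comb x2 (- x1)).
  - by rewrite unitrN; case: xU; [right | left].
  - by rewrite (_ : _ + _ = 0); [apply: dvdR0 | ring].
  - by rewrite (_ : _ + _ = - Δ); [apply: dvdRN | rewrite /Δ; ring].
  - by rewrite (_ : x2 * x1 + _ = 0) ?mul0r //; ring.
have [yU | y12] : (y1 \is a GRing.unit \/ y2 \is a GRing.unit) \/
                  (dvdR two y1 /\ dvdR two y2).
  by case: (unit_or_dvd2 y1) (unit_or_dvd2 y2); tauto.
  apply: (@disc_square_of_null_comb y2 (- y1)).
  - by rewrite unitrN; case: yU; [right | left].
  - by rewrite (_ : _ + _ = Δ) //; rewrite /Δ; ring.
  - by rewrite (_ : _ + _ = 0); [apply: dvdR0 | ring].
  - by rewrite (_ : y2 * y1 + _ = 0) ?mulr0 //; ring.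
have [c1 [c2 [cU Z2 W2]]] := dvd2_det_kernel τ2.
case: x12 y12 => [x1e x2e] [y1e y2e].
have [c12 c22] := prim (dvdRD (dvdR_mull _ x1e) (dvdR_mull _ x2e))
  (dvdRD (dvdR_mull _ y1e) (dvdR_mull _ y2e)) Z2 W2.
by case: cU => /unit_ndvd2.
Qed.

End ScaledHyperbolicRep.

End BinaryForm.

Section AnisotropicObstruction.
Variables (β γ ρ x1 y1 x2 y2 t11 t12 t21 t22 : R).
Hypotheses (ρ_aniso : anisotropic ρ) (β2 : dvdR two β).
Local Notation Q := (qform 0 β (two * γ)).
Local Notation B := (bform 0 β (two * γ)).

Lemma qformE z w : Q z w = two * (β * z * w + γ * w ^+ 2).
Proof. by rewrite /qform; ring. Qed.

Lemma bform_dvd2 z1 w1 z2 w2 : dvdR two (B z1 w1 z2 w2).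
Proof.
rewrite /bform mul0r mul0r add0r -mulrA.
by apply: dvdRD; [apply: dvdR_mulr | rewrite -!mulrA; apply: dvdR_multiple].
Qed.

Lemma not_rep_aniso_unimodular : dvdR two γ ->
  two * x1 * y1 + Q t11 t12 = two -> two * x2 * y2 + Q t21 t22 = two * ρ ->
  x1 * y2 + x2 * y1 + B t11 t12 t21 t22 = 1 -> False.
Proof.
move=> γ2 E1 E2 E3.
have yU : y2 \is a GRing.unit \/ (- y1) \is a GRing.unit.
  rewrite unitrN; case: (unit_or_dvd2 y1) => [|y1e]; first by right.
  case: (unit_or_dvd2 y2) => [|y2e]; first by left.
  case: (unit_ndvd2 (unitr1 R)); rewrite -[X in dvdR _ X]E3.
  apply: dvdRD; last exact: bform_dvd2.
  by apply: dvdRD; apply: dvdR_mull.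
(* At [y2 row_1 - y1 row_2] the form is twice a unit, but [Q] is divisible by 4. *)
have := rep_qform_comb y2 (- y1) E1 E2 E3.
rewrite (_ : y2 * y1 + - y1 * y2 = 0) ?mulr0 ?mul0r ?add0r; last by ring.
set z := _ * t11 + _; set w := _ * t12 + _.
rewrite qformE (_ : y2 ^+ 2 * two + _ + _ = two * (y2 ^+ 2 + y2 * - y1 + ρ * (- y1) ^+ 2)).
  2: by ring.
move=> /(mulfI two_neq0) Qzw; apply: (unit_ndvd2 (ρ_aniso yU)); rewrite -Qzw.
by apply: dvdRD; apply: dvdR_mulr => //; apply: dvdR_mulr.
Qed.

Lemma not_rep_aniso_scaled : γ \is a GRing.unit ->
  two * x1 * y1 + Q t11 t12 = two * two ->
  two * x2 * y2 + Q t21 t22 = two * two * ρ ->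
  x1 * y2 + x2 * y1 + B t11 t12 t21 t22 = two -> False.
Proof.
move=> γU E1 E2 E3.
have Δ2 : dvdR two (x1 * y2 - y1 * x2).
  have -> : x1 * y2 - y1 * x2 = x1 * y2 + x2 * y1 + B t11 t12 t21 t22
                                - B t11 t12 t21 t22 - two * (x2 * y1) by ring.
  rewrite E3.
  apply: dvdRB; last exact: dvdR_multiple.
  by apply: dvdRB; [apply: dvdR_refl | apply: bform_dvd2].
(* A primitive combination with even [x]- and [y]-parts takes the value
   [4 u], [u] a unit; halving forces [w] even, and then [u] even. *)
have [c1 [c2 [cU X2 Y2]]] := dvd2_det_kernel Δ2.
have := rep_qform_comb c1 c2 E1 E2 E3.
set X := c1 * x1 + _ in X2 *; set Y := c1 * y1 + _ in Y2 *.
set z := c1 * t11 + _; set w := c1 * t12 + _.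
rewrite qformE (_ : c1 ^+ 2 * (two * two) + _ + _ =
                    two * (two * (c1 ^+ 2 + c1 * c2 + ρ * c2 ^+ 2))).
  2: by ring.
rewrite -mulrA -mulrDr => /(mulfI two_neq0) XYzw.
have w2 : dvdR two w.
  have : dvdR two (γ * w ^+ 2).
    rewrite (_ : γ * _ = two * (c1 ^+ 2 + c1 * c2 + ρ * c2 ^+ 2) - X * Y - β * z * w).
      apply: dvdRB; last by apply/dvdR_mulr/dvdR_mulr.
      by apply: dvdRB; [apply: dvdR_multiple | apply: dvdR_mulr].
    by rewrite -XYzw; ring.
  by case/dvd2_mul => [/(unit_ndvd2 γU) | /(@dvd2_mul w w) []].
apply: (unit_ndvd2 (ρ_aniso cU)); apply: (dvdR_mul2l two_neq0).
rewrite -XYzw; apply: dvdRD; first exact: dvdR_mul.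
apply: dvdRD; first by rewrite -mulrA; apply: dvdR_mul => //; apply: dvdR_mull.
by rewrite expr2 mulrA; apply: dvdR_mul => //; apply: dvdR_mull.
Qed.

End AnisotropicObstruction.

End DyadicIntegers.

Section Congruence.
Variables (R : idomainType) (n : nat) (U G : 'M[R]_n).
Hypothesis U_unit : U \in unitmx.

Lemma even_lattice_conj : even_lattice G -> even_lattice (U *m G *m U^T).
Proof.
move=> [[G_sym G_det] G_even]; split; first split.
- by rewrite !trmx_mul trmxK G_sym mulmxA.
- have U_det : \det U != 0.
    by apply: contraTneq U_unit; rewrite unitmxE => ->; rewrite unitr0.
  by rewrite !det_mulmx det_tr !mulf_neq0.
by move=> v; have := G_even (v *m U); rewrite trmx_mul !mulmxA.
Qed.

Lemma isometric_conj H : isometric (U *m G *m U^T) H -> isometric G H.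
Proof.
move=> [V [V_unit <-]]; exists (V *m U); split; first by rewrite unitmx_mul V_unit.
by rewrite trmx_mul !mulmxA.
Qed.

Lemma prim_represents_conj m (N : 'M[R]_m) :
  prim_represents G N -> prim_represents (U *m G *m U^T) N.
Proof.
move=> [X [XN [P [PP [P_sub P_sup]]]]].
have UiU : invmx U *m U = 1 by rewrite mulVmx.
exists (X *m invmx U); split.
  rewrite /representation -XN trmx_mul !mulmxA -[X *m _ *m U]mulmxA UiU mulmx1.
  by rewrite -[X *m G *m U^T *m _]mulmxA -trmx_mul UiU trmx1 mulmx1.
exists (U *m P *m invmx U); split.
  by rewrite !mulmxA -[U *m P *m _ *m U]mulmxA UiU mulmx1 -[U *m P *m P]mulmxA PP.
split=> [v | c].
  by have [c Pc] := P_sub (v *m U); exists c; rewrite !mulmxA Pc.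
have [v Pv] := P_sup c; exists (v *m invmx U).
by rewrite mulmxA Pv !mulmxA -[v *m _ *m U]mulmxA UiU mulmx1.
Qed.

End Congruence.

(* The image of [X] is a summand, so [c X = p y] puts [y] in it, [y = c' X];
   nondegeneracy of [N] makes [X] injective, whence [c = p c']. *)
Lemma primitive_rep_dvd (R : idomainType) m n (G : 'M[R]_m) (N : 'M[R]_n)
    (X : 'M[R]_(n, m)) (p : R) :
  p != 0 -> representation G N X -> \det N != 0 -> primitive_image X ->
  forall c : 'rV[R]_n, (forall j, dvdR p ((c *m X) 0 j)) -> forall i, dvdR p (c 0 i).
Proof.
move=> p0 XN N_det [P [PP [P_sub P_sup]]] c cX_dvd.
have [q qE] := fin_all_exists cX_dvd.
pose y : 'rV[R]_m := \row_j q j.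
have cXE : c *m X = p *: y by apply/matrixP => i j; rewrite (ord1 i) qE !mxE.
have yP : y *m P = y.
  have [v vP] := P_sup c; apply/matrixP => i j; apply: (mulfI p0).
  have : (p *: (y *m P)) i j = (p *: y) i j.
    by rewrite scalemxAl -cXE vP -mulmxA PP -vP cXE.
  by rewrite !mxE.
have [c' c'X] := P_sub y.
have ker_X : (c - p *: c') *m X = 0 by rewrite mulmxBl -scalemxAl -c'X yP cXE subrr.
have ker_N : \det N *: (c - p *: c') = 0.
  by rewrite -mul_mx_scalar -mul_mx_adj mulmxA -XN !mulmxA ker_X !mul0mx.
have -> : c = p *: c'.
  by apply/eqP; rewrite -subr_eq0; move: ker_N => /eqP; rewrite scalemx_eq0 (negbTE N_det).
by move=> i; rewrite mxE; apply: dvdR_multiple.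
Qed.

Lemma quad_row_block_diag (R : comNzRingType) p n1 n2 (A : 'M[R]_(p, n1))
    (B : 'M[R]_(p, n2)) (G1 : 'M[R]_n1) (G2 : 'M[R]_n2) :
  row_mx A B *m block_mx G1 0 0 G2 *m (row_mx A B)^T =
  A *m G1 *m A^T + B *m G2 *m B^T.
Proof. by rewrite mul_row_block tr_row_mx mul_row_col !mulmx0 !addr0 !add0r. Qed.

Lemma conj_block_diag1 (R : comNzRingType) n1 n2 (G1 : 'M[R]_n1) (G2 V : 'M[R]_n2) :
  block_mx 1%:M 0 0 V *m block_mx G1 0 0 G2 *m (block_mx 1%:M 0 0 V)^T =
  block_mx G1 0 0 (V *m G2 *m V^T).
Proof.
rewrite tr_block_mx !mulmx_block trmx1 !trmx0.
by rewrite !(mul1mx, mulmx1, mul0mx, mulmx0, addr0, add0r).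
Qed.

Lemma unitmx_block_diag1 (R : comUnitRingType) n1 n2 (V : 'M[R]_n2) :
  V \in unitmx -> (block_mx 1%:M 0 0 V : 'M[R]_(n1 + n2)) \in unitmx.
Proof. by rewrite !unitmxE det_ublock det1 mul1r. Qed.

Section TwoByTwo.
Variable R : idomainType.
Local Notation two := (2%:R : R).

Lemma ord2P (i : 'I_2) : i = 0 \/ i = 1.
Proof. by case: i => [[|[|//]]] i2; [left | right]; apply: val_inj. Qed.

Lemma sum_ord2 (F : 'I_2 -> R) : \sum_(i < 2) F i = F 0 + F 1.
Proof. by rewrite big_ord_recl big_ord1; congr (_ + F _); apply: val_inj. Qed.

Lemma mulmx_ord2E m n (A : 'M[R]_(m, 2)) (B : 'M[R]_(2, n)) i j :
  (A *m B) i j = A i 0 * B 0 j + A i 1 * B 1 j.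
Proof. by rewrite mxE sum_ord2. Qed.

Lemma det_ord2E (A : 'M[R]_2) : \det A = A 0 0 * A 1 1 - A 0 1 * A 1 0.
Proof.
rewrite (expand_det_row A 0) sum_ord2 /cofactor !det_mx11 !mxE /=.
have -> : lift (0 : 'I_2) (0 : 'I_1) = 1 by apply: val_inj.
have -> : lift (1 : 'I_2) (0 : 'I_1) = 0 by apply: val_inj.
by rewrite expr0 expr1; ring.
Qed.

Lemma quad_ord2E m (X : 'M[R]_(m, 2)) (G : 'M[R]_2) i j :
  (X *m G *m X^T) i j =
  (X i 0 * G 0 0 + X i 1 * G 1 0) * X j 0 + (X i 0 * G 0 1 + X i 1 * G 1 1) * X j 1.
Proof. by rewrite !mulmx_ord2E !mxE. Qed.

Definition mx2 (a b c d : R) : 'M[R]_2 :=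
  \matrix_(i, j) if i == 0 then (if j == 0 then a else b) else (if j == 0 then c else d).

Lemma mx2_00 a b c d : mx2 a b c d 0 0 = a. Proof. by rewrite mxE. Qed.
Lemma mx2_01 a b c d : mx2 a b c d 0 1 = b. Proof. by rewrite mxE. Qed.
Lemma mx2_10 a b c d : mx2 a b c d 1 0 = c. Proof. by rewrite mxE. Qed.
Lemma mx2_11 a b c d : mx2 a b c d 1 1 = d. Proof. by rewrite mxE. Qed.
Definition mx2E := (mx2_00, mx2_01, mx2_10, mx2_11).

Lemma mx2P (A : 'M[R]_2) a b c d :
  A 0 0 = a -> A 0 1 = b -> A 1 0 = c -> A 1 1 = d -> A = mx2 a b c d.
Proof.
move=> A00 A01 A10 A11; apply/matrixP => i j.
by case: (ord2P i) => ->; case: (ord2P j) => ->; rewrite mx2E.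
Qed.

Lemma det_mx2 a b c d : \det (mx2 a b c d) = a * d - b * c.
Proof. by rewrite det_ord2E !mx2E. Qed.

Lemma hyp_mx2 : hyp R = mx2 0 1 1 0.
Proof. by apply: mx2P; rewrite mxE. Qed.

Lemma det_hyp : \det (hyp R) = -1.
Proof. by rewrite hyp_mx2 det_mx2 mul0r mulr1 sub0r. Qed.

Lemma trmx_hyp : (hyp R)^T = hyp R.
Proof. by apply/matrixP => i j; rewrite !mxE eq_sym. Qed.

Lemma mulmx_hyp_hyp : hyp R *m hyp R = 1.
Proof.
apply/matrixP => i j; rewrite mulmx_ord2E !mxE.
by case: (ord2P i) => ->; case: (ord2P j) => ->;
  rewrite /= ?(mulr0, mul0r, mulr1, add0r, addr0).
Qed.

Lemma even_lattice_mx2 a b c :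
  dvdR two a -> dvdR two c -> a * c - b * b != 0 -> even_lattice (mx2 a b b c).
Proof.
move=> a2 c2 det0; split; first split.
- by apply: mx2P; rewrite mxE /= mx2E.
- by rewrite det_mx2.
move=> v; rewrite quad_ord2E !mx2E.
rewrite (_ : _ + _ = a * v 0 0 ^+ 2 + two * (b * v 0 0 * v 0 1) + c * v 0 1 ^+ 2).
  2: by ring.
apply: dvdRD; last exact: dvdR_mulr.
by apply: dvdRD; [apply: dvdR_mulr | apply: dvdR_multiple].
Qed.

End TwoByTwo.

Lemma perm_pair (n : nat) (i0 j0 i j : 'I_n) : i0 != j0 -> i != j ->
  exists s : 'S_n, s i0 = i /\ s j0 = j.
Proof.
move=> i0j0 ij; pose j' := tperm i0 i j.
exists (tperm j0 j' * tperm i0 i)%g; rewrite !permM tpermL.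
split; last by rewrite /j' tpermK.
have j'i0 : j' != i0.
  by apply: contra_neq ij => e; rewrite -(tpermK i0 i j) -/j' e tpermL.
by rewrite [tperm j0 _ _]tpermD ?tpermL // eq_sym.
Qed.

Lemma hyperbolic_summand (R : idomainType) n (G : 'M[R]_(2 + n))
    (X : 'M[R]_(2, 2 + n)) (Z : 'M[R]_(n, 2 + n)) :
  G^T = G -> X *m G *m X^T = hyp R -> col_mx X Z \in unitmx ->
  exists (U : 'M[R]_(2 + n)) (M : 'M[R]_n),
    U \in unitmx /\ U *m G *m U^T = block_mx (hyp R) 0 0 M.
Proof.
move=> G_sym XG XZ_unit.
pose C := X *m G *m Z^T; pose D := Z *m G *m Z^T.
have G_blocks : col_mx X Z *m G *m (col_mx X Z)^T = block_mx (hyp R) C C^T D.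
  rewrite tr_col_mx mul_col_mx mul_col_row XG; congr block_mx.
  by rewrite /C !trmx_mul !trmxK G_sym !mulmxA.
(* [E] clears the off-diagonal blocks because [hyp R] is an involution. *)
pose K := - (C^T *m hyp R).
pose E : 'M[R]_(2 + n) := block_mx 1%:M 0 K 1%:M.
have E_unit : E \in unitmx by rewrite unitmxE det_lblock !det1 mulr1 unitr1.
exists (E *m col_mx X Z), (D - C^T *m hyp R *m C); split.
  by rewrite unitmx_mul E_unit.
rewrite (_ : _ *m G *m _ = E *m (col_mx X Z *m G *m (col_mx X Z)^T) *m E^T); last first.
  by rewrite trmx_mul !mulmxA.
have KH : K *m hyp R = - C^T by rewrite /K mulNmx -mulmxA mulmx_hyp_hyp mulmx1.
have HK : hyp R *m K^T = - C.
  by rewrite /K linearN /= trmx_mul trmx_hyp trmxK mulmxN mulmxA mulmx_hyp_hyp mul1mx.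
rewrite G_blocks /E tr_block_mx !mulmx_block !trmx1 !trmx0.
rewrite !(mul1mx, mulmx1, mul0mx, mulmx0, addr0, add0r) KH HK !addNr mul0mx add0r.
by rewrite /K mulNmx addrC.
Qed.

Section HyperbolicSplitting.
Variable R : idomainType.
Hypothesis hR : dyadic_local_integers R.

Definition minor2 (A : 'M[R]_(2, 4)) (i j : 'I_4) := A 0 i * A 1 j - A 0 j * A 1 i.

Lemma sum_ord4 (F : 'I_4 -> R) :
  \sum_(k < 4) F k = F (inord 0) + F (inord 1) + F (inord 2) + F (inord 3).
Proof.
rewrite !big_ord_recl big_ord0 addr0 !addrA.
by congr (_ + _ + _ + _); congr F; apply: val_inj => /=; rewrite inordK.
Qed.

Lemma cauchy_binet_2x4 (A B : 'M[R]_(2, 4)) : \det (A *m B^T) =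
  minor2 A (inord 0) (inord 1) * minor2 B (inord 0) (inord 1) +
  minor2 A (inord 0) (inord 2) * minor2 B (inord 0) (inord 2) +
  minor2 A (inord 0) (inord 3) * minor2 B (inord 0) (inord 3) +
  minor2 A (inord 1) (inord 2) * minor2 B (inord 1) (inord 2) +
  minor2 A (inord 1) (inord 3) * minor2 B (inord 1) (inord 3) +
  minor2 A (inord 2) (inord 3) * minor2 B (inord 2) (inord 3).
Proof. by rewrite det_ord2E !mxE !sum_ord4 /minor2 !mxE; ring. Qed.

(* By Cauchy-Binet [1 = det (X Y^T)] is a sum of products of minors, and in
   the local ring [R] one of the terms must be a unit. *)
Lemma unit_minor_of_right_inverse (X Y : 'M[R]_(2, 4)) :
  X *m Y^T = 1 -> exists i j, i != j /\ minor2 X i j \is a GRing.unit.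
Proof.
move=> XY; have : \det (X *m Y^T) \is a GRing.unit by rewrite XY det1 unitr1.
rewrite cauchy_binet_2x4.
have found a b : (a < 4)%N -> (b < 4)%N -> a != b ->
    minor2 X (inord a) (inord b) \is a GRing.unit ->
    exists i j, i != j /\ minor2 X i j \is a GRing.unit.
  move=> a4 b4 ab XU; exists (inord a), (inord b); split=> //.
  by apply: contra_neq ab => /(congr1 val) /=; rewrite !inordK.
case/(unitD_split hR) => [/(unitD_split hR) [/(unitD_split hR) [/(unitD_split hR)
  [/(unitD_split hR) [] |] |] |] |]; rewrite unitrM => /andP[XU _];
  by apply: (found _ _ _ _ _ XU).
Qed.

Lemma completion_of_unit_minor (X : 'M[R]_(2, 2 + 2)) i j :
  i != j -> minor2 X i j \is a GRing.unit ->
  exists Z : 'M[R]_(2, 2 + 2), col_mx X Z \in unitmx.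
Proof.
move=> ij XU.
have [s [s0 s1]] : exists s : 'S_(2 + 2), s (lshift 2 0) = i /\ s (lshift 2 1) = j.
  by apply: perm_pair.
pose X1 := col_perm s X.
have X1s : X1 *m perm_mx s = X.
  by rewrite /X1 col_permE -mulmxA -perm_mxM mulVg perm_mx1 mulmx1.
exists (row_mx 0 1%:M *m perm_mx s).
rewrite -{1}X1s -mul_col_mx unitmx_mul unitmx_perm andbT.
rewrite -[X1]hsubmxK -block_mxEv unitmxE det_ublock det1 mulr1.
by rewrite det_ord2E !mxE s0 s1.
Qed.

Lemma split_off_hyp (G : 'M[R]_(2 + 2)) (X : 'M[R]_(2, 2 + 2)) :
  G^T = G -> X *m G *m X^T = hyp R ->
  exists (U : 'M[R]_(2 + 2)) (M : 'M[R]_2),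
    U \in unitmx /\ U *m G *m U^T = block_mx (hyp R) 0 0 M.
Proof.
move=> G_sym XG.
have XY : X *m (hyp R *m X *m G)^T = 1.
  by rewrite !trmx_mul G_sym trmx_hyp !mulmxA XG mulmx_hyp_hyp.
have [i [j [ij XU]]] := unit_minor_of_right_inverse XY.
have [Z XZ_unit] := completion_of_unit_minor ij XU.
exact: hyperbolic_summand G_sym XG XZ_unit.
Qed.

End HyperbolicSplitting.

Section HyperbolicPlusBinary.
Variable R : idomainType.
Hypothesis hR : dyadic_local_integers R.
Local Notation two := (2%:R : R).
Implicit Types M N : 'M[R]_2.

Definition hyp_orth M : 'M[R]_(2 + 2) := block_mx (hyp R) 0 0 M.

Definition represents_all_binary n (G : 'M[R]_n) :=
  forall N : 'M[R]_2, even_lattice N -> prim_represents G N.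

Lemma even_hyp_orth M : even_lattice (hyp_orth M) ->
  [/\ M 1 0 = M 0 1, dvdR two (M 0 0), dvdR two (M 1 1) & \det M != 0].
Proof.
move=> [[G_sym G_det] G_even].
have M_sym : M^T = M.
  by move: G_sym; rewrite tr_block_mx trmx_hyp !trmx0 => /eq_block_mx[].
have M_even (w : 'rV[R]_2) : dvdR two ((w *m M *m w^T) 0 0).
  by have := G_even (row_mx 0 w); rewrite quad_row_block_diag !mul0mx add0r.
split.
- by rewrite -[in LHS]M_sym mxE.
- have := M_even (\row_j (j == 0)%:R).
  by rewrite quad_ord2E !mxE /= !(mul1r, mul0r, mulr1, mulr0, addr0, add0r).
- have := M_even (\row_j (j == 1)%:R).
  by rewrite quad_ord2E !mxE /= !(mul1r, mul0r, mulr1, mulr0, addr0, add0r).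
- by move: G_det; rewrite det_ublock det_hyp mulN1r oppr_eq0.
Qed.

Lemma rep_hyp_orth_eqs M N (X : 'M[R]_(2, 2 + 2)) : M 1 0 = M 0 1 ->
  representation (hyp_orth M) N X ->
  let x := lsubmx X in let t := rsubmx X in
  [/\ two * x 0 0 * x 0 1 + qform (M 0 0) (M 0 1) (M 1 1) (t 0 0) (t 0 1) = N 0 0,
      two * x 1 0 * x 1 1 + qform (M 0 0) (M 0 1) (M 1 1) (t 1 0) (t 1 1) = N 1 1 &
      x 0 0 * x 1 1 + x 1 0 * x 0 1 +
        bform (M 0 0) (M 0 1) (M 1 1) (t 0 0) (t 0 1) (t 1 0) (t 1 1) = N 0 1].
Proof.
move=> M_sym; rewrite /representation -{1 2}(hsubmxK X) quad_row_block_diag => <- /=.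
have addE (P Q : 'M[R]_2) i j : (P + Q) i j = P i j + Q i j by rewrite mxE.
by rewrite !addE !quad_ord2E hyp_mx2 !mx2E M_sym /qform /bform; split; ring.
Qed.

Lemma prim_hyp_orth_dvd2 M N (X : 'M[R]_(2, 2 + 2)) :
  representation (hyp_orth M) N X -> \det N != 0 -> primitive_image X ->
  let x := lsubmx X in let t := rsubmx X in
  forall c1 c2,
  dvdR two (c1 * x 0 0 + c2 * x 1 0) -> dvdR two (c1 * x 0 1 + c2 * x 1 1) ->
  dvdR two (c1 * t 0 0 + c2 * t 1 0) -> dvdR two (c1 * t 0 1 + c2 * t 1 1) ->
  dvdR two c1 /\ dvdR two c2.
Proof.
move=> XN N_det X_prim /= c1 c2 h1 h2 h3 h4.
pose c : 'rV[R]_2 := \row_i (if i == 0 then c1 else c2).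
have c_dvd := primitive_rep_dvd (two_neq0 hR) XN N_det X_prim (c := c).
have cE : c 0 0 = c1 /\ c 0 1 = c2 by rewrite !mxE.
split; [rewrite -cE.1 | rewrite -cE.2]; apply: c_dvd => j;
  rewrite -(hsubmxK X) mul_mx_row -[j]splitK; case: (split j) => k /=;
  rewrite ?row_mxEl ?row_mxEr mulmx_ord2E cE.1 cE.2; by case: (ord2P k) => ->.
Qed.

Lemma isotropic_normal_form M r : M 1 0 = M 0 1 ->
  M 0 1 ^+ 2 - M 0 0 * M 1 1 = r ^+ 2 -> dvdR two (M 0 0) -> dvdR two (M 1 1) ->
  exists V β γ, V \in unitmx /\ V *m M *m V^T = mx2 0 β β (two * γ).
Proof.
move=> M_sym discE [γ0 M00] [γ1 M11].
have [p0 [p1 [pU pQ]]] := primitive_isotropic_vector hR discE.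
have quad0 (V : 'M[R]_2) : V 0 0 = p0 -> V 0 1 = p1 -> (V *m M *m V^T) 0 0 = 0.
  by move=> V00 V01; rewrite quad_ord2E V00 V01 M_sym -pQ /qform; ring.
case: pU => [p0U | p1U].
  exists (mx2 p0 p1 0 1), (p0 * M 0 1 + p1 * M 1 1), γ1; split.
    by rewrite unitmxE det_mx2 mulr1 mulr0 subr0.
  apply: mx2P; [by apply: quad0; rewrite mx2E | | |];
    by rewrite quad_ord2E !mx2E M_sym ?M11; ring.
exists (mx2 p0 p1 1 0), (p0 * M 0 0 + p1 * M 0 1), γ0; split.
  by rewrite unitmxE det_mx2 mulr0 mulr1 sub0r unitrN.
apply: mx2P; [by apply: quad0; rewrite mx2E | | |];
  by rewrite quad_ord2E !mx2E M_sym ?M00; ring.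
Qed.

Lemma hyp_of_unit_offdiag β γ : β \is a GRing.unit ->
  exists V, V \in unitmx /\ V *m mx2 0 β β (two * γ) *m V^T = hyp R.
Proof.
move=> βU; pose u := β^-1; have βu : β * u = 1 by rewrite mulrV.
exists (mx2 1 0 (- (γ * u * u)) u); split.
  by rewrite unitmxE det_mx2 mul1r mul0r subr0 unitrV.
rewrite hyp_mx2; apply: mx2P; rewrite quad_ord2E !mx2E.
- by ring.
- by rewrite -[RHS]βu; ring.
- by rewrite -[RHS]βu; ring.
rewrite (_ : _ + _ = two * γ * u * u * (1 - β * u)); last by ring.
by rewrite βu subrr mulr0.
Qed.

Lemma normal_form_of_represents_all M :
  even_lattice (hyp_orth M) -> represents_all_binary (hyp_orth M) ->
  exists V β γ, V \in unitmx /\ V *m M *m V^T = mx2 0 β β (two * γ).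
Proof.
move=> M_even M_rep; have [M_sym M00 M11 M_det] := even_hyp_orth M_even.
have disc0 : M 0 1 ^+ 2 - M 0 0 * M 1 1 != 0.
  by move: M_det; rewrite det_ord2E M_sym -oppr_eq0 opprB expr2.
have [d [δ [δU discE]]] := dyadic_factor hR disc0.
pose N := mx2 0 (two ^+ (d + 2)) (two ^+ (d + 2)) 0.
have N_det : \det N != 0 by rewrite det_mx2 mul0r sub0r oppr_eq0 mulf_neq0 // exp2_neq0.
have N_even : even_lattice N.
  by apply: even_lattice_mx2; [exact: dvdR0 | exact: dvdR0 | rewrite -det_mx2].
have [X [XN X_prim]] := M_rep N N_even.
have [E1 E2 E3] := rep_hyp_orth_eqs M_sym XN; rewrite !mx2E in E1 E2 E3.
have [r discr] := disc_square_of_prim_rep hR δU discE E1 E2 E3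
  (prim_hyp_orth_dvd2 XN N_det X_prim).
exact: isotropic_normal_form M_sym discr M00 M11.
Qed.

Lemma offdiag_unit_of_represents_all β γ :
  represents_all_binary (hyp_orth (mx2 0 β β (two * γ))) -> β \is a GRing.unit.
Proof.
move=> M_rep; case: (unit_or_dvd2 hR β) => // β2; exfalso.
have [ρ ρ_aniso] := exists_anisotropic hR.
have M_sym : mx2 0 β β (two * γ) 1 0 = mx2 0 β β (two * γ) 0 1 by rewrite !mx2E.
have [γU | γ2] := unit_or_dvd2 hR γ.
  have N_even : even_lattice (mx2 (two * two) two two (two * two * ρ)).
    apply: even_lattice_mx2; first exact: dvdR_multiple.
      by rewrite -mulrA; apply: dvdR_multiple.
    rewrite (_ : _ - _ = two * two * (two * two * ρ - 1)); last by ring.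
    by rewrite !mulf_neq0 ?two_neq0 ?dvd2_subr1_neq0 // -mulrA; apply: dvdR_multiple.
  have [X [XN _]] := M_rep _ N_even.
  have [E1 E2 E3] := rep_hyp_orth_eqs M_sym XN; rewrite !mx2E in E1 E2 E3.
  exact: (not_rep_aniso_scaled hR ρ_aniso β2 γU E1 E2 E3).
have N_even : even_lattice (mx2 two 1 1 (two * ρ)).
  apply: even_lattice_mx2; [exact: dvdR_refl | exact: dvdR_multiple |].
  by rewrite mulr1 mulrA dvd2_subr1_neq0 // -mulrA; apply: dvdR_multiple.
have [X [XN _]] := M_rep _ N_even.
have [E1 E2 E3] := rep_hyp_orth_eqs M_sym XN; rewrite !mx2E in E1 E2 E3.
exact: (not_rep_aniso_unimodular hR ρ_aniso β2 γ2 E1 E2 E3).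
Qed.

Lemma hyp_orth_isometric_hyp2 M :
  even_lattice (hyp_orth M) -> represents_all_binary (hyp_orth M) ->
  isometric (hyp_orth M) (hyp2 R).
Proof.
move=> M_even M_rep.
have [V [β [γ [V_unit VM]]]] := normal_form_of_represents_all M_even M_rep.
have VU := unitmx_block_diag1 2 V_unit.
apply: (isometric_conj VU); rewrite /hyp_orth conj_block_diag1 VM.
have M'_rep : represents_all_binary (hyp_orth (mx2 0 β β (two * γ))).
  by move=> N /M_rep; rewrite /hyp_orth -VM -conj_block_diag1; apply: prim_represents_conj.
have [W [W_unit WM]] := hyp_of_unit_offdiag γ (offdiag_unit_of_represents_all M'_rep).
exists (block_mx 1%:M 0 0 W); split; first exact: unitmx_block_diag1.
by rewrite conj_block_diag1 WM.
Qed.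

End HyperbolicPlusBinary.

Unset Implicit Arguments.

Theorem proposition4p2 (R : idomainType) (hR : dyadic_local_integers R)
  (G : 'M[R]_4) :
  even_lattice G ->
  (forall G2 : 'M[R]_2, even_lattice G2 -> prim_represents G G2) ->
  isometric G (hyp2 R).
Proof.
move=> G_even G_rep; have G_sym := G_even.1.1.
have H_even : even_lattice (hyp R).
  rewrite hyp_mx2; apply: even_lattice_mx2; [exact: dvdR0 | exact: dvdR0 |].
  by rewrite -det_mx2 -hyp_mx2 det_hyp oppr_eq0 oner_neq0.
have [X [XG _]] := G_rep _ H_even.
have [U [M [U_unit UG]]] := split_off_hyp hR G_sym XG.
apply: (isometric_conj U_unit); rewrite UG.
apply: hyp_orth_isometric_hyp2 => //; rewrite /hyp_orth -UG.
- exact: even_lattice_conj.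
- by move=> N /G_rep; apply: prim_represents_conj.
Qed.
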